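(* Suppose $D$ is finite. Then the dimension of $\mathcal{A}(D)/\mathcal{V}(D)$ equals the $\mathbb{F}_2$-rank of the adjacency matrix of the collinearity graph of the Fischer space $\Pi(D)$.
   Context: Let $D$ be a class of $3$-transpositions generating a group $G$ (a conjugacy class of involutions with $o(de)\in\{1,2,3\}$ for $d,e\in D$). $\Pi(D)$ has point set $D$ and lines the triples $\{d,e,d^e\}$ with $d,e$ non-commuting; its collinearity graph joins distinct collinear (i.e., non-commuting) points. $\mathcal{A}(D)$ is the $\mathbb{F}_2$-space with basis $D$ and bilinear product $d*e=d+e+f$ if $\{d,e,f\}$ is a line, $0$ otherwise; the form $\langle d,e\rangle$ is $1$ if $d,e$ do not commute and $0$ otherwise; $\mathcal{V}(D)$ is its radical. *)

From HB Require Import structures.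
From mathcomp Require Import all_boot all_order all_algebra all_fingroup.
Set Implicit Arguments. Unset Strict Implicit. Unset Printing Implicit Defensive.
Import GRing.Theory.
Local Open Scope group_scope.

Section ThreeTransp.
Variable gT : finGroupType.

Definition three_transposition_class (D : {set gT}) : Prop :=
  [/\ exists2 d0, d0 \in D & D = d0 ^: <<D>>,
      {in D, forall d, #[d] = 2%N} &
      {in D &, forall d e, #[d * e] \in [:: 1; 2; 3]%N} ].

Definition fischer_line (D : {set gT}) (L : {set gT}) : bool :=
  [exists d in D, exists e in D, (d * e != e * d) && (L == [set d; e; d ^ e])].

Definition collinear (D : {set gT}) (x y : gT) : bool :=
  (x != y) && [exists L : {set gT}, [&& fischer_line D L, x \in L & y \in L]].

Definition adjacency_mx (D : {set gT}) : 'M['F_2]_#|D| :=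
  \matrix_(i, j) ((collinear D (enum_val i) (enum_val j)) : nat)%:R%R.

(** A(D) as an F_2-vector space: row vectors 'rV['F_2]_#|D|, the i-th standard
    basis vector being the point enum_val i of D.  The form <d,e> is 1 iff d, e
    do not commute, extended bilinearly. *)
Definition form_on_basis (d e : gT) : 'F_2 := ((d * e != e * d)%g)%:R%R.

Definition AD_form (D : {set gT}) (u v : 'rV['F_2]_#|D|) : 'F_2 :=
  (\sum_(i < #|D|) \sum_(j < #|D|)
     u 0 i * v 0 j * form_on_basis (enum_val i) (enum_val j))%R.

Definition is_radical (D : {set gT}) (V : {vspace 'rV['F_2]_#|D|}) : Prop :=
  forall u, (u \in V) = [forall v, AD_form u v == 0%R].

End ThreeTransp.

From mathcomp Require Import all_boot all_order all_algebra all_fingroup.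
From mathcomp Require Import cyclic.

(* In a class of 3-transpositions two points commute exactly when they are not
   collinear: non-commuting d, e generate an S_3, whose three involutions d, e,
   d^e = e^d pairwise do not commute.  Hence the adjacency matrix of the
   collinearity graph is the Gram matrix M of the form <,>, the radical V is
   the left kernel of M, and dim A(D) - dim V = rank M. *)

Set Implicit Arguments.
Unset Strict Implicit.
Unset Printing Implicit Defensive.

Import GRing.Theory.

Section Involutions.
Variable gT : finGroupType.
Local Open Scope group_scope.
Implicit Types x y z : gT.

Lemma invg_involution x : #[x] = 2%N -> x^-1 = x.
Proof. by move=> ox; rewrite invg_expg ox. Qed.

Lemma conjg_commuteE x y z : (x ^ z * y ^ z == y ^ z * x ^ z) = (x * y == y * x).
Proof. by rewrite -!conjMg (inj_eq (conjg_inj z)). Qed.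

Lemma conjg_self x : x ^ x = x.
Proof. by rewrite conjgE mulKg. Qed.

Section TwoInvolutions.
Variables d e : gT.
Hypotheses (od : #[d] = 2%N) (oe : #[e] = 2%N).

Lemma commute_involutionsE : (d * e == e * d) = ((d * e) ^+ 2 == 1).
Proof.
by rewrite expg2 -eq_invg_mul invMg !invg_involution // eq_sym.
Qed.

(* (de)^3 = 1 reads (ded)(ede) = 1, and ede is an involution. *)
Lemma involutions_braid : #[d * e] = 3%N -> d ^ e = e ^ d.
Proof.
move=> ode; have ox : #[d ^ e] = 2%N by rewrite orderJ.
have cube : (e ^ d) * (d ^ e) = 1.
  rewrite !conjgE !invg_involution // -(expg_order (d * e)) ode.
  by rewrite !expgS expg0 mulg1 !mulgA.
by apply/eqP; rewrite eq_sym -[d ^ e](invg_involution ox) -mulg_eq1 cube.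
Qed.

End TwoInvolutions.
End Involutions.

Section ThreeTranspositionClass.
Variables (gT : finGroupType) (D : {set gT}).
Hypothesis D3 : three_transposition_class D.
Local Open Scope group_scope.

Lemma order_three_transposition d : d \in D -> #[d] = 2%N.
Proof. by case: D3 => _ oD _; apply: oD. Qed.

Lemma ncommute_order3 d e : d \in D -> e \in D -> d * e != e * d ->
  #[d * e] = 3%N.
Proof.
move=> dD eD; have od := order_three_transposition dD.
rewrite (commute_involutionsE od (order_three_transposition eD)) -order_dvdn.
by case: D3 => _ _ oDD; move: (oDD d e dD eD); rewrite !inE => /or3P[]/eqP->.
Qed.

Lemma fischer_line_ncommute d e : d \in D -> e \in D -> d * e != e * d ->
  {in [set d; e; d ^ e] &, forall x y, x != y -> x * y != y * x}.
Proof.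
move=> dD eD nde.
have ned : e * d != d * e by rewrite eq_sym.
have nde' : e * d ^ e != d ^ e * e by rewrite -{1 4}(conjg_self e) conjg_commuteE.
have ndd' : d * d ^ e != d ^ e * d.
  have [od oe] := (order_three_transposition dD, order_three_transposition eD).
  rewrite (involutions_braid od oe (ncommute_order3 dD eD nde)).
  by rewrite -{1 4}(conjg_self d) conjg_commuteE.
move=> x y; rewrite !inE -!orbA => /or3P[]/eqP-> /or3P[]/eqP->;
  by rewrite ?eqxx // ?(eq_sym (d ^ e * _)).
Qed.

Lemma collinearE x y : x \in D -> y \in D -> collinear D x y = (x * y != y * x).
Proof.
move=> xD yD; apply/idP/idP.
  case/andP=> nxy /existsP[L /and3P[/existsP[d /andP[dD]]]].
  case/existsP=> e /and3P[eD nde /eqP->] xL yL.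
  exact: (fischer_line_ncommute dD eD nde xL yL nxy).
move=> nxy; rewrite /collinear; apply/andP; split.
  by apply: contraNneq nxy => ->.
apply/existsP; exists [set x; y; x ^ y]; rewrite !inE !eqxx orbT /= andbT.
by apply/existsP; exists x; rewrite xD; apply/existsP; exists y; rewrite yD nxy /=.
Qed.

End ThreeTranspositionClass.

Local Open Scope ring_scope.

Definition form_mx (gT : finGroupType) (D : {set gT}) : 'M['F_2]_#|D| :=
  \matrix_(i, j) form_on_basis (enum_val i) (enum_val j).

Lemma adjacency_form_mx (gT : finGroupType) (D : {set gT}) :
  three_transposition_class D -> adjacency_mx D = form_mx D.
Proof.
by move=> D3; apply/matrixP => i j; rewrite !mxE collinearE ?enum_valP.
Qed.

Lemma AD_formE (gT : finGroupType) (D : {set gT}) (u v : 'rV_#|D|) :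
  AD_form u v = (u *m form_mx D *m v^T) 0 0.
Proof.
rewrite /AD_form mxE exchange_big; apply: eq_bigr => j _.
rewrite !mxE big_distrl; apply: eq_bigr => i _.
by rewrite !mxE mulrAC.
Qed.

Lemma rowv_eq0_dot (R : pzSemiRingType) n (w : 'rV[R]_n) :
  (forall v : 'rV_n, (w *m v^T) 0 0 = 0) -> w = 0.
Proof.
move=> w0; apply/rowP => j.
by rewrite [RHS]mxE -(w0 (delta_mx 0 j)) trmx_delta -colE !mxE.
Qed.

Lemma dimv_rowspace (F : fieldType) m n (A : 'M[F]_(m, n))
    (U : {vspace 'rV[F]_n}) :
  (forall u, (u \in U) = (u <= A)%MS) -> \dim U = \rank A.
Proof.
move=> UA; pose B := row_base A.
pose X := [tuple row i B | i < \rank A].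
have XB (i : 'I_(\rank A)) : X`_i = row i B by rewrite -tnth_nth tnth_mktuple.
apply: (@size_basis _ _ _ _ X); apply/andP; split.
  rewrite eqEsubv; apply/andP; split.
    apply/span_subvP => _ /mapP[i _ ->].
    by rewrite UA -(eq_row_base A) row_sub.
  apply/subvP => v; rewrite UA -(eq_row_base A) => /submxP[w ->].
  rewrite mulmx_sum_row; apply: memv_suml => i _; apply/memvZ/memv_span.
  by apply/mapP; exists i; rewrite ?mem_enum.
apply/freeP => k Xk i.
have : \row_j k j *m B = 0 *m B.
  by rewrite mul0mx mulmx_sum_row -[RHS]Xk; apply: eq_bigr => j _; rewrite XB mxE.
by move/(row_free_inj (row_base_free A))/rowP/(_ i); rewrite !mxE.
Qed.

Lemma radical_kermx (gT : finGroupType) (D : {set gT})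
    (V : {vspace 'rV['F_2]_#|D|}) :
  is_radical V -> forall u, (u \in V) = (u <= kermx (form_mx D))%MS.
Proof.
move=> radV u; rewrite radV sub_kermx; apply/forallP/eqP => [uM0 | uM0 v].
  by apply: rowv_eq0_dot => v; apply/eqP; rewrite -AD_formE.
by rewrite AD_formE uM0 mul0mx mxE.
Qed.

Theorem proposition6p1 (gT : finGroupType) (D : {set gT})
    (V : {vspace 'rV['F_2]_#|D|}) :
  three_transposition_class D ->
  is_radical V ->
  (\dim (fullv : {vspace 'rV['F_2]_#|D|}) - \dim V)%N = \rank (adjacency_mx D).
Proof.
move=> D3 radV.
rewrite (dimv_rowspace (radical_kermx radV)) mxrank_ker dimvf dim_matrix mul1r.
by rewrite subKn ?rank_leq_col // adjacency_form_mx.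
Qed.
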